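(* Let $R$ be a ring and let $\mathfrak{p}$ be a proper left ideal of $R$. The following statements are equivalent: (1) $\mathfrak{p}$ is weakly prime. (2) For left ideals $A,B$ of $R$ both containing $\mathfrak{p}$, $AB\subseteq\mathfrak{p}$ implies $A=\mathfrak{p}$ or $B=\mathfrak{p}$. (3) For left ideals $A,B$ of $R$, $(A+\mathfrak{p})(B+\mathfrak{p})\subseteq\mathfrak{p}$ implies $A\subseteq\mathfrak{p}$ or $B\subseteq\mathfrak{p}$. (4) For left ideals $A,B$ of $R$, $AB\subseteq\mathfrak{p}$ and $\mathfrak{p}\subseteq A$ imply $\mathfrak{p}=A$ or $B\subseteq\mathfrak{p}$. (5) For left ideals $A,B$ of $R$, $(A+\mathfrak{p})B\subseteq\mathfrak{p}$ implies $A\subseteq\mathfrak{p}$ or $B\subseteq\mathfrak{p}$. (6) For $a,b\in R$, $(a+\mathfrak{p})R(b+\mathfrak{p})\subseteq\mathfrak{p}$ implies $a\in\mathfrak{p}$ or $b\in\mathfrak{p}$. (7) For every two-sided ideal $A$ of $R$ and every left ideal $B$ of $R$, $AB\subseteq\mathfrak{p}$ and $\mathfrak{p}B\subseteq\mathfrak{p}$ imply $A\subseteq\mathfrak{p}$ or $B\subseteq\mathfrak{p}$. (8) For $a,b\in R$, $aRb\subseteq\mathfrak{p}$ and $\mathfrak{p}Rb\subseteq\mathfrak{p}$ imply $a\in\mathfrak{p}$ or $b\in\mathfrak{p}$.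
   Context: Rings are associative and unital, not necessarily commutative. A left ideal $\mathfrak{p}$ of $R$ is weakly prime if $\mathfrak{p}\neq R$ and, for all left ideals $A,B$ of $R$, $AB\subseteq\mathfrak{p}$ and $\mathfrak{p}B\subseteq\mathfrak{p}$ imply $A\subseteq\mathfrak{p}$ or $B\subseteq\mathfrak{p}$. For subsets, $(a+\mathfrak{p})R(b+\mathfrak{p})$ denotes the set of all products $xry$ with $x\in a+\mathfrak{p}$, $r\in R$, $y\in b+\mathfrak{p}$. *)

From mathcomp Require Import all_boot all_algebra.
Set Implicit Arguments. Unset Strict Implicit. Unset Printing Implicit Defensive.
Import GRing.Theory.
Local Open Scope ring_scope.

Section Defs.
Variable R : nzRingType.

Definition subsetR (A B : R -> Prop) : Prop := forall x, A x -> B x.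

Definition left_ideal (A : R -> Prop) : Prop :=
  [/\ A 0, (forall x y, A x -> A y -> A (x - y)) & (forall r x, A x -> A (r * x))].

Definition two_sided_ideal (A : R -> Prop) : Prop :=
  left_ideal A /\ (forall x r, A x -> A (x * r)).

Definition proper_set (p : R -> Prop) : Prop := exists x, ~ p x.

Inductive prodset (A B : R -> Prop) : R -> Prop :=
  | prodset0 : prodset A B 0
  | prodset_mul a b : A a -> B b -> prodset A B (a * b)
  | prodset_add x y : prodset A B x -> prodset A B y -> prodset A B (x + y).

Definition sumset (A B : R -> Prop) : R -> Prop :=
  fun z => exists a b, [/\ A a, B b & z = a + b].

Definition coset (a : R) (p : R -> Prop) : R -> Prop :=
  fun z => exists q, p q /\ z = a + q.

Definition triple_prod (X Y : R -> Prop) : R -> Prop :=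
  fun z => exists x r y, [/\ X x, Y y & z = x * r * y].

Definition weakly_prime (p : R -> Prop) : Prop :=
  proper_set p /\
  forall A B, left_ideal A -> left_ideal B ->
    subsetR (prodset A B) p -> subsetR (prodset p B) p ->
    subsetR A p \/ subsetR B p.

End Defs.

(* Since [p] is a left ideal, [X (B + p) <= p] iff [X B <= p], and
   [(A + p) B <= p] iff both [A B <= p] and [p B <= p]; with these two facts
   conditions (1)-(5) are reformulations of one another.  The elementwise
   condition (8) follows from (7) applied to the two-sided ideal
   [{x | x R b <= p}] and the left ideal [R b]; conversely, for [a] in
   [A \ p] and [b] in [B] one has [a R b <= A B] and [p R b <= p B].  The
   cosets of (6) are handled by [q r b = (a + q) r b - a r b]. *)

From mathcomp Require Import all_boot all_algebra.
From Stdlib Require Import Classical FunctionalExtensionality PropExtensionality.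

Import GRing.Theory.
Local Open Scope ring_scope.

Set Implicit Arguments.
Unset Strict Implicit.

Section LeftIdeals.
Variable R : nzRingType.
Implicit Types (A B C X : R -> Prop) (a b q r x y : R).

Lemma left_ideal0 C : left_ideal C -> C 0.
Proof. by case. Qed.

Lemma left_idealB C x y : left_ideal C -> C x -> C y -> C (x - y).
Proof. by case=> _ + _; apply. Qed.

Lemma left_idealM C r x : left_ideal C -> C x -> C (r * x).
Proof. by case=> _ _; apply. Qed.

Lemma left_idealD C x y : left_ideal C -> C x -> C y -> C (x + y).
Proof.
move=> hC Cx Cy; have Cny : C (- y).
  by rewrite -sub0r; apply: left_idealB => //; apply: left_ideal0.
by rewrite -[y]opprK; apply: left_idealB.
Qed.

Lemma subsetR_antisym A B : subsetR A B -> subsetR B A -> A = B.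
Proof.
move=> hAB hBA; apply: functional_extensionality => x.
by apply: propositional_extensionality; split; [apply: hAB | apply: hBA].
Qed.

Lemma prodset_sub A B C : left_ideal C ->
  (forall a b, A a -> B b -> C (a * b)) -> subsetR (prodset A B) C.
Proof.
move=> hC hAB x; elim=> [|a b|x1 y1 _ Cx1 _ Cy1];
  [exact: left_ideal0 | exact: hAB | exact: left_idealD].
Qed.

Lemma prodsetS A (A' : R -> Prop) B (B' : R -> Prop) :
  subsetR A A' -> subsetR B B' -> subsetR (prodset A B) (prodset A' B').
Proof.
move=> hA hB x; elim=> [|a b Aa Bb|x1 y1 _ h1 _ h2]; last exact: prodset_add.
  exact: prodset0.
by apply: prodset_mul; [apply: hA | apply: hB].
Qed.

Lemma sumset_left_ideal A B :
  left_ideal A -> left_ideal B -> left_ideal (sumset A B).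
Proof.
move=> hA hB; split.
- by exists 0, 0; rewrite addr0; split=> //; apply: left_ideal0.
- move=> _ _ [a [b [Aa Bb ->]]] [a' [b' [Aa' Bb' ->]]].
  exists (a - a'), (b - b'); rewrite opprD addrACA.
  by split=> //; apply: left_idealB.
- move=> r _ [a [b [Aa Bb ->]]]; exists (r * a), (r * b); rewrite mulrDr.
  by split=> //; apply: left_idealM.
Qed.

Lemma subset_sumsetl A B : B 0 -> subsetR A (sumset A B).
Proof. by move=> B0 a Aa; exists a, 0; rewrite addr0. Qed.

Lemma subset_sumsetr A B : A 0 -> subsetR B (sumset A B).
Proof. by move=> A0 b Bb; exists 0, b; rewrite add0r. Qed.

Lemma sumset_sub A B C : left_ideal C ->
  subsetR A C -> subsetR B C -> subsetR (sumset A B) C.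
Proof.
by move=> hC hA hB _ [a [b [Aa Bb ->]]]; apply: left_idealD; [|apply: hA|apply: hB].
Qed.

Lemma sumset_eql A C : left_ideal A -> left_ideal C -> subsetR C A ->
  sumset A C = A.
Proof.
move=> hA hC hCA; apply: subsetR_antisym; first by apply: sumset_sub.
exact: subset_sumsetl (left_ideal0 hC).
Qed.

Lemma prodset_sumsetl_subE A (A' : R -> Prop) B C :
  left_ideal C -> A 0 -> A' 0 ->
  subsetR (prodset (sumset A A') B) C <->
  subsetR (prodset A B) C /\ subsetR (prodset A' B) C.
Proof.
move=> hC A0 A'0; split=> [hAB | [hAB hA'B]].
  by split=> x /prodsetS hx; apply/hAB/hx => //;
    [apply: subset_sumsetl | apply: subset_sumsetr].
apply: prodset_sub => // _ b [a [a' [Aa Aa' ->]]] Bb; rewrite mulrDl.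
by apply: left_idealD => //; [apply: hAB | apply: hA'B]; apply: prodset_mul.
Qed.

Lemma prodset_sumsetr_subE X B C : left_ideal C ->
  subsetR (prodset X (sumset B C)) C <-> subsetR (prodset X B) C.
Proof.
move=> hC; split=> [hXB x /prodsetS hx | hXB].
  by apply/hXB/hx => //; apply: subset_sumsetl (left_ideal0 hC).
apply: prodset_sub => // y _ Xy [b [c [Bb Cc ->]]]; rewrite mulrDr.
by apply: left_idealD => //; [apply: hXB; apply: prodset_mul | apply: left_idealM].
Qed.

Lemma coset_refl a C : C 0 -> coset a C a.
Proof. by exists 0; rewrite addr0. Qed.

Definition colon C b : R -> Prop := fun x => forall r, C (x * r * b).

Definition lprincipal b : R -> Prop := fun x => exists t, x = t * b.

Lemma colon_two_sided_ideal C b : left_ideal C -> two_sided_ideal (colon C b).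
Proof.
move=> hC; split; first split.
- by move=> r; rewrite !mul0r; apply: left_ideal0.
- by move=> x y hx hy r; rewrite !mulrBl; apply: left_idealB.
- by move=> s x hx r; rewrite -!mulrA; apply: (left_idealM _ hC); rewrite mulrA.
- by move=> x s hx r; rewrite -(mulrA x s r).
Qed.

Lemma lprincipal_left_ideal b : left_ideal (lprincipal b).
Proof.
split.
- by exists 0; rewrite mul0r.
- by move=> _ _ [t ->] [t' ->]; exists (t - t'); rewrite mulrBl.
- by move=> r _ [t ->]; exists (r * t); rewrite mulrA.
Qed.

End LeftIdeals.

Section WeaklyPrime.
Variable R : nzRingType.
Variable p : R -> Prop.
Hypothesis hp : left_ideal p.

Definition over_prime := forall A B : R -> Prop, left_ideal A -> left_ideal B ->
  subsetR p A -> subsetR p B -> subsetR (prodset A B) p -> A = p \/ B = p.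

Definition sumset_prime := forall A B : R -> Prop, left_ideal A -> left_ideal B ->
  subsetR (prodset (sumset A p) (sumset B p)) p -> subsetR A p \/ subsetR B p.

Definition over_left_prime := forall A B : R -> Prop, left_ideal A -> left_ideal B ->
  subsetR (prodset A B) p -> subsetR p A -> p = A \/ subsetR B p.

Definition sumsetl_prime := forall A B : R -> Prop, left_ideal A -> left_ideal B ->
  subsetR (prodset (sumset A p) B) p -> subsetR A p \/ subsetR B p.

Definition coset_prime := forall a b : R,
  subsetR (triple_prod (coset a p) (coset b p)) p -> p a \/ p b.

Definition two_sided_prime := forall A B : R -> Prop,
  two_sided_ideal A -> left_ideal B ->
  subsetR (prodset A B) p -> subsetR (prodset p B) p -> subsetR A p \/ subsetR B p.

Definition elem_prime := forall a b : R,
  (forall r, p (a * r * b)) -> (forall q r, p q -> p (q * r * b)) -> p a \/ p b.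

Lemma weakly_prime_sumsetlE : proper_set p -> weakly_prime p <-> sumsetl_prime.
Proof.
have p0 := left_ideal0 hp.
move=> hprop; split=> [[_ wp] A B hA hB | sp].
  by move/(prodset_sumsetl_subE _ hp (left_ideal0 hA) p0) => [hAB hpB]; apply: wp.
split=> // A B hA hB hAB hpB; apply: sp => //.
exact/(prodset_sumsetl_subE _ hp (left_ideal0 hA) p0).
Qed.

Lemma sumsetl_sumset_primeE : sumsetl_prime <-> sumset_prime.
Proof.
by split=> h A B hA hB /(prodset_sumsetr_subE _ _ hp); apply: h.
Qed.

Lemma sumset_over_primeE : sumset_prime <-> over_prime.
Proof.
split=> [sp A B hA hB hpA hpB hAB | op A B hA hB hAB].
  have [hAp | hBp] : subsetR A p \/ subsetR B p.
    by apply: sp; rewrite // !sumset_eql.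
  - by left; apply: subsetR_antisym.
  - by right; apply: subsetR_antisym.
have [eA | eB] := op _ _ (sumset_left_ideal hA hp) (sumset_left_ideal hB hp)
  (subset_sumsetr (left_ideal0 hA)) (subset_sumsetr (left_ideal0 hB)) hAB.
- by left; rewrite -eA; apply: subset_sumsetl (left_ideal0 hp).
- by right; rewrite -eB; apply: subset_sumsetl (left_ideal0 hp).
Qed.

Lemma weakly_prime_over_left : weakly_prime p -> over_left_prime.
Proof.
move=> [_ wp] A B hA hB hAB hpA.
have hpB : subsetR (prodset p B) p by move=> x /prodsetS hx; apply/hAB/hx.
have [hAp | hBp] := wp A B hA hB hAB hpB; last by right.
by left; apply: subsetR_antisym.
Qed.

Lemma over_left_sumsetl_prime : over_left_prime -> sumsetl_prime.
Proof.
move=> olp A B hA hB hAB.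
have [eA | hBp] := olp _ _ (sumset_left_ideal hA hp) hB hAB
  (subset_sumsetr (left_ideal0 hA)); last by right.
by left; rewrite eA; apply: subset_sumsetl (left_ideal0 hp).
Qed.

Lemma weakly_prime_two_sided : weakly_prime p -> two_sided_prime.
Proof. by move=> [_ wp] A B [hA _]; apply: wp. Qed.

Lemma two_sided_elem_prime : two_sided_prime -> elem_prime.
Proof.
move=> tp a b haRb hpRb.
have hAB : subsetR (prodset (colon p b) (lprincipal b)) p.
  by apply: prodset_sub => // x _ hx [t ->]; rewrite mulrA.
have hpB : subsetR (prodset p (lprincipal b)) p.
  by apply: prodset_sub => // q _ hq [t ->]; rewrite mulrA; apply: hpRb.
have [hA | hB] :=
  tp _ _ (colon_two_sided_ideal b hp) (lprincipal_left_ideal b) hAB hpB.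
- by left; apply: hA.
- by right; apply: hB; exists 1; rewrite mul1r.
Qed.

Lemma elem_weakly_prime : proper_set p -> elem_prime -> weakly_prime p.
Proof.
move=> hprop ep; split=> // A B hA hB hAB hpB.
case: (classic (subsetR A p)) => [|/not_all_ex_not [a naA]]; first by left.
have [Aa npa] := imply_to_and _ _ naA.
right=> b Bb.
have haRb r : p (a * r * b).
  by rewrite -mulrA; apply: hAB; apply: prodset_mul => //; apply: left_idealM.
have hpRb q r : p q -> p (q * r * b).
  by move=> pq; rewrite -mulrA; apply: hpB; apply: prodset_mul => //; apply: left_idealM.
by case: (ep a b haRb hpRb).
Qed.

Lemma coset_elem_primeE : coset_prime <-> elem_prime.
Proof.
have p0 := left_ideal0 hp.
split=> [cp a b haRb hpRb | ep a b hab]; apply: cp || apply: ep.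
- move=> _ [_ [r [_ [[q [pq ->]] [q' [pq' ->]] ->]]]].
  rewrite mulrDr [(a + q) * r]mulrDl mulrDl.
  apply: left_idealD => //; last exact: left_idealM.
  by apply: left_idealD; [| apply: haRb | apply: hpRb].
- by move=> r; apply: hab; exists a, r, b; split=> //; apply: coset_refl.
- move=> q r pq; have -> : q * r * b = (a + q) * r * b - a * r * b.
    by rewrite !mulrDl addrAC subrr add0r.
  apply: left_idealB => //; apply: hab.
    by exists (a + q), r, b; split=> //; [exists q | apply: coset_refl].
  by exists a, r, b; split=> //; apply: coset_refl.
Qed.

End WeaklyPrime.

Theorem proposition2p21 (R : nzRingType) (p : R -> Prop)
    (hp : left_ideal p) (hprop : proper_set p) :
  [<->
   (* (1) *) weakly_prime p;
   (* (2) *) (forall A B : R -> Prop, left_ideal A -> left_ideal B ->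
                subsetR p A -> subsetR p B ->
                subsetR (prodset A B) p -> A = p \/ B = p);
   (* (3) *) (forall A B : R -> Prop, left_ideal A -> left_ideal B ->
                subsetR (prodset (sumset A p) (sumset B p)) p ->
                subsetR A p \/ subsetR B p);
   (* (4) *) (forall A B : R -> Prop, left_ideal A -> left_ideal B ->
                subsetR (prodset A B) p -> subsetR p A ->
                p = A \/ subsetR B p);
   (* (5) *) (forall A B : R -> Prop, left_ideal A -> left_ideal B ->
                subsetR (prodset (sumset A p) B) p ->
                subsetR A p \/ subsetR B p);
   (* (6) *) (forall a b : R,
                subsetR (triple_prod (coset a p) (coset b p)) p ->
                p a \/ p b);
   (* (7) *) (forall A B : R -> Prop, two_sided_ideal A -> left_ideal B ->
                subsetR (prodset A B) p -> subsetR (prodset p B) p ->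
                subsetR A p \/ subsetR B p);
   (* (8) *) (forall a b : R,
                (forall r, p (a * r * b)) ->
                (forall q r, p q -> p (q * r * b)) ->
                p a \/ p b)].
Proof.
have e15 := weakly_prime_sumsetlE hp hprop.
have e53 := sumsetl_sumset_primeE hp.
have e32 := sumset_over_primeE hp.
have e68 := coset_elem_primeE hp.
have e81 := elem_weakly_prime hprop.
have e17 := weakly_prime_two_sided (p := p).
have e78 := two_sided_elem_prime hp.
tfae.
- by move/e15/e53/e32.
- by move/e32.
- by move/e53/e15/weakly_prime_over_left.
- exact: over_left_sumsetl_prime.
- by move/e15/e17/e78/e68.
- by move/e68/e81/e17.
- exact: e78.
- exact: e81.
Qed.
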